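(* Let $\Delta$ (vertex set $V$, field $K=k(a_{i,j}:1\le i\le d, j\in V)$, degree map $\deg_\Delta$) and $\Delta'$ (vertex set $V'$, field $K'=k(a'_{i,j}:1\le i\le d, j\in V')$, degree map $\deg_{\Delta'}$) be two connected oriented simplicial $k$-homology manifolds of dimension $d-1$. Let $G=\{j_1,\dots,j_s\}$ be a face of $\Delta$ and $G'=\{j_1',\dots,j_s'\}$ a face of $\Delta'$, let $S$ be the vertex set of the closed star $\mathrm{Star}_\Delta(G)$, and let $K_S=k(a_{i,j}:1\le i\le d,\ j\in S)\subseteq K$. Suppose $\tau:\mathrm{Star}_\Delta(G)\to\mathrm{Star}_{\Delta'}(G')$ is an isomorphism of simplicial complexes with $\tau(j_m)=j'_m$ for $1\le m\le s$, and identify $K_S$ with a subfield of $K'$ via $a_{i,j}\mapsto a'_{i,\tau(j)}$. Let $b_1,\dots,b_s$ be positive integers with $b_1+\dots+b_s=d$. Then $\deg_\Delta(x_{j_1}^{b_1}\cdots x_{j_s}^{b_s})\in K_S$, and under this identification $$\deg_\Delta(x_{j_1}^{b_1}\cdots x_{j_s}^{b_s})=\epsilon\,\deg_{\Delta'}(x_{j_1'}^{b_1}\cdots x_{j_s'}^{b_s}),$$ where $\epsilon=1$ if the orientations on $\mathrm{Star}_\Delta(G)$ induced by the orientation of $\Delta$ and (via $\tau$) by that of $\Delta'$ agree, and $\epsilon=-1$ if they are opposite.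
   Context: A connected $k$-homology manifold of dimension $d-1$ ($d\ge2$, $k$ a field) is a connected simplicial complex such that the link of each nonempty face $G$ has the homology over $k$ of a sphere of dimension $d-|G|-1$. An orientation (if $\mathrm{char}\,k\neq 2$) is a choice, for each facet, of an ordering of its vertices up to even permutations, such that for every $(d-2)$-face the two orientations induced on it by the two facets containing it are opposite; a facet ordered $v_1,\dots,v_d$ induces on the face omitting $v_i$ the ordering $v_1,\dots,\widehat{v_i},\dots,v_d$ if $i-1$ is even, and the opposite orientation if $i-1$ is odd. If $\mathrm{char}\,k=2$, every such complex is regarded as oriented and all signs below are $1$. For a facet $F=\{j_1<\dots<j_d\}$, $\epsilon_F\in\{\pm1\}$ is the sign of the permutation taking $(j_1,\dots,j_d)$ to the chosen ordering. For $\Delta$ with vertex set $V$ and $K=k(a_{i,j}:1\le i\le d, j\in V)$ (independent indeterminates), $K[\Delta]$ is the Stanley–Reisner ring over $K$ in variables $x_j$, $\theta_i=\sum_ja_{i,j}x_j$, $H(\Delta)=K[\Delta]/(\theta_1,\dots,\theta_d)$; $H^d(\Delta)$ is one-dimensional and $\deg_\Delta:H^d(\Delta)\to K$ is the $K$-linear isomorphism with $\deg_\Delta(x_F)=\epsilon_F/[F]$ for every facet $F$, where $x_F=\prod_{j\in F}x_j$ and $[F]$ is the determinant of the $d\times d$ matrix with $(i,m)$ entry $a_{i,j_m}$ (columns in increasing order of $j_m$). The ordering of vertices in $V'$ used for $[\cdot]$ is compatible in the sense that orientations are compared via $\tau$. The closed star $\mathrm{Star}_\Delta(G)$ is the subcomplex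 consisting of all faces containing $G$ and all their subfaces. *)

From HB Require Import structures.
From mathcomp Require Import all_boot all_order all_algebra.
From mathcomp Require Import fraction.
From mathcomp.multinomials Require Import mpoly.
Set Implicit Arguments. Unset Strict Implicit. Unset Printing Implicit Defensive.
Import Order.TTheory GRing.Theory.
Local Open Scope ring_scope.

Definition is_complex n (D : {set {set 'I_n}}) : Prop :=
  (forall F E : {set 'I_n}, F \in D -> E \subset F -> E \in D) /\
  (forall v : 'I_n, [set v] \in D).

Definition link n (D : {set {set 'I_n}}) (G : {set 'I_n}) : {set {set 'I_n}} :=
  [set F in D | [disjoint F & G] && (F :|: G \in D)].

Definition star n (D : {set {set 'I_n}}) (G : {set 'I_n}) : {set {set 'I_n}} :=
  [set F in D | F :|: G \in D].
Definition star_verts n (D : {set {set 'I_n}}) (G : {set 'I_n}) : {set 'I_n} :=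
  [set v | [set v] :|: G \in D].

(* faces with j vertices (dimension j-1); j = 0 is the empty face *)
Definition faces_sz n (L : {set {set 'I_n}}) (j : nat) : {set {set 'I_n}} :=
  [set F in L | #|F| == j].

Definition pos n (F : {set 'I_n}) (v : 'I_n) : nat := #|[set u in F | (u < v)%N]|.

(* matrix of the simplicial boundary map C_j -> C_{j-1} (rows: faces with
   j+1 vertices, columns: faces with j vertices), coefficients in k *)
Definition bdmx (k : fieldType) n (L : {set {set 'I_n}}) (j : nat) :
  'M[k]_(#|faces_sz L j.+1|, #|faces_sz L j|) :=
  \matrix_(a < #|faces_sz L j.+1|, b < #|faces_sz L j|)
    (let F : {set 'I_n} := enum_val a in let E : {set 'I_n} := enum_val b in
     if E \subset F then \sum_(v in F :\: E) (-1) ^+ pos F v else 0).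

Definition bdrank (k : fieldType) n (L : {set {set 'I_n}}) (j : nat) : nat :=
  if j is j'.+1 then \rank (bdmx k L j') else 0%N.

(* dimension over k of the reduced homology H~_{j-1}(L; k) *)
Definition rhdim (k : fieldType) n (L : {set {set 'I_n}}) (j : nat) : nat :=
  (#|faces_sz L j| - bdrank k L j - bdrank k L j.+1)%N.

Definition sphere_homology (k : fieldType) n (L : {set {set 'I_n}}) (m : int) : Prop :=
  forall j : nat, rhdim k L j = (if (j%:Z == m + 1) then 1%N else 0%N).

Definition homology_manifold (k : fieldType) (d : nat) n (D : {set {set 'I_n}}) : Prop :=
  is_complex D /\
  forall G : {set 'I_n}, G \in D -> G != set0 ->
    sphere_homology k (link D G) (d%:Z - (#|G|)%:Z - 1).

Definition connected_cx n (D : {set {set 'I_n}}) : Prop :=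
  forall u v : 'I_n, connect (fun x y : 'I_n => [set x; y] \in D) u v.

Definition facet (d : nat) n (D : {set {set 'I_n}}) (F : {set 'I_n}) : bool :=
  (F \in D) && (#|F| == d).

(* eps F = true  iff the chosen orientation of the facet F is the odd class
   relative to the increasing order; the sign (-1)^(eps F) is taken in k, so
   that in characteristic 2 all signs are 1. *)
Definition oriented (k : fieldType) (d : nat) n (D : {set {set 'I_n}})
  (eps : {set 'I_n} -> bool) : Prop :=
  forall (F F' : {set 'I_n}) (v v' : 'I_n),
    facet d D F -> facet d D F' -> F != F' -> v \in F -> v' \in F' ->
    F :\ v = F' :\ v' ->
    (-1) ^+ (eps F + pos F v) = - ((-1) ^+ (eps F' + pos F' v')) :> k.

Definition inversions n n' (tau : 'I_n -> 'I_n') (F : {set 'I_n}) : nat :=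
  #|[set uv in setX F F | ((uv.1 < uv.2)%N && (tau uv.2 < tau uv.1)%N)]|.

(* The field K = k(a_{i,j} : i < d, j < n).  The indeterminate a_{i,j} is the
   variable of index enum_rank (i, j). *)
Definition NV (d n : nat) : nat := #|{: 'I_d * 'I_n}|.
Definition Kf (k : fieldType) (d n : nat) : fieldType := {fraction {mpoly k[NV d n]}}.
Definition avar d n (i : 'I_d) (j : 'I_n) : 'I_(NV d n) := enum_rank (i, j).
Definition aK (k : fieldType) d n (i : 'I_d) (j : 'I_n) : Kf k d n :=
  FracField.tofrac ('X_(avar i j) : {mpoly k[NV d n]}).

(* [F] : determinant of (a_{i, j_m}) with j_1 < ... < j_d the vertices of F *)
Definition detF (k : fieldType) d n (F : {set 'I_n}) : Kf k d n :=
  \det (\matrix_(i < d, m < d) \sum_(v in F | pos F v == m) aK k i v).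

Definition xF (k : fieldType) d n (F : {set 'I_n}) : {mpoly (Kf k d n)[n]} :=
  \prod_(v in F) 'X_v.
Definition theta (k : fieldType) d n (i : 'I_d) : {mpoly (Kf k d n)[n]} :=
  \sum_(j < n) (aK k i j)%:MP * 'X_j.

(* membership in the ideal I_Delta + (theta_1, ..., theta_d) *)
Definition in_J (k : fieldType) d n (D : {set {set 'I_n}}) (p : {mpoly (Kf k d n)[n]}) : Prop :=
  exists (r : {set 'I_n} -> {mpoly (Kf k d n)[n]}) (s : 'I_d -> {mpoly (Kf k d n)[n]}),
    p = \sum_(F : {set 'I_n} | F \notin D) r F * xF k d F + \sum_(i < d) s i * theta k n i.

Definition homog_deg R n (e : nat) (p : {mpoly R[n]}) : bool :=
  all (fun m => mdeg m == e) (msupp p).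

(* phi induces deg_Delta : H^d(Delta) -> K : it is K-linear, kills the degree-d
   part of the ideal, and sends x_F to eps_F/[F] for every facet F. *)
Definition is_deg_map (k : fieldType) d n (D : {set {set 'I_n}}) (eps : {set 'I_n} -> bool)
  (phi : {mpoly (Kf k d n)[n]} -> Kf k d n) : Prop :=
  [/\ forall p q, phi (p + q) = phi p + phi q,
      forall (c : Kf k d n) p, phi (c *: p) = c * phi p,
      forall p, homog_deg d p -> in_J D p -> phi p = 0
    & forall F, facet d D F -> phi (xF k d F) = (-1) ^+ eps F / detF k d F].

Definition mono R n s (j : 'I_s -> 'I_n) (b : 'I_s -> nat) : {mpoly R[n]} :=
  \prod_(m < s) 'X_(j m) ^+ b m.
Arguments mono {R n s} j b.

Definition only_vars (k : fieldType) d n (S : {set 'I_n}) (p : {mpoly k[NV d n]}) : Prop :=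
  forall m, m \in msupp p -> forall (i : 'I_d) (j : 'I_n), j \notin S -> m (avar i j) = 0%N.

(* a_{i,j} |-> a'_{i, tau j} *)
Definition transport (k : fieldType) d n n' (tau : 'I_n -> 'I_n')
  (p : {mpoly k[NV d n]}) : {mpoly k[NV d n']} :=
  mmap (fun c : k => c%:MP) (fun v => 'X_(avar (enum_val v).1 (tau (enum_val v).2))) p.

Definition star_iso n n' (D : {set {set 'I_n}}) (D' : {set {set 'I_n'}})
  (G : {set 'I_n}) (G' : {set 'I_n'}) (tau : 'I_n -> 'I_n') : Prop :=
  [/\ {in star_verts D G &, injective tau},
      tau @: star_verts D G = star_verts D' G'
    & forall F : {set 'I_n}, F \subset star_verts D G ->
        (F \in star D G) = (tau @: F \in star D' G')].

From HB Require Import structures.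
From mathcomp Require Import all_boot all_order all_algebra.
From mathcomp Require Import fraction.
From mathcomp.multinomials Require Import mpoly.
From mathcomp Require Import fingroup perm zify ring.
Set Implicit Arguments. Unset Strict Implicit. Unset Printing Implicit Defensive.
Import GRing.Theory.
Local Open Scope ring_scope.

(* On a monomial x^b whose support H is a face containing G, the degree map is
   computed by local linear algebra. If some exponent b_w exceeds 1, pick a
   facet F containing H; a row of the inverse of the matrix (a_{i,v})_{v in F}
   gives a combination of the theta_i equal to x_w modulo the variables outside
   F. Multiplying by x^b / x_w and dropping the monomials whose support is not a
   face expresses deg(x^b) through degrees of monomials supported on faces with
   one more vertex, with coefficients that are rational functions of the a_{i,v}
   for v in Star(G). Iterating ends at the facets F containing G, where
   deg(x_F) = eps_F / [F]. Every step only involves Star(G), so tau transports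
   the whole computation, and the orientation hypothesis accounts for the sign
   of the reordering of the columns of [F]. *)

Section Transport.
Variables (k : fieldType) (d n n' : nat) (tau : 'I_n -> 'I_n') (S : {set 'I_n}).
Local Notation P := {mpoly k[NV d n]}.
Local Notation tf := FracField.tofrac.

Lemma transportD (p q : P) : transport tau (p + q) = transport tau p + transport tau q.
Proof. exact: mmapD. Qed.

Lemma transportN (p : P) : transport tau (- p) = - transport tau p.
Proof. exact: mmapN. Qed.

Lemma transportM (p q : P) : transport tau (p * q) = transport tau p * transport tau q.
Proof. exact: (rmorphM (mmap (@mpolyC _ k) _)). Qed.

Lemma transportC (c : k) : transport tau (c%:MP : P) = c%:MP.
Proof. exact: mmapC. Qed.

Lemma transportXa i v : transport tau ('X_(avar i v) : P) = 'X_(avar i (tau v)).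
Proof. by rewrite /transport mmapX mmap1U /avar enum_rankK. Qed.

Lemma only_varsD (p q : P) : only_vars S p -> only_vars S q -> only_vars S (p + q).
Proof. by move=> hp hq m /msuppD_le; rewrite mem_cat => /orP [/hp|/hq]. Qed.

Lemma only_varsN (p : P) : only_vars S p -> only_vars S (- p).
Proof. by move=> hp m; rewrite (perm_mem (msuppN p)); apply: hp. Qed.

Lemma only_varsM (p q : P) : only_vars S p -> only_vars S q -> only_vars S (p * q).
Proof.
move=> hp hq m /msuppM_le /allpairsP [[m1 m2] /= [h1 h2 ->]] i j hj.
by rewrite mnmDE (hp _ h1 _ _ hj) (hq _ h2 _ _ hj).
Qed.

Lemma only_varsC (c : k) : only_vars S (c%:MP : P).
Proof.
move=> m; rewrite msuppC; case: (c == 0) => //.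
by rewrite inE => /eqP -> i j _; rewrite mnm0E.
Qed.

Lemma only_varsXa i v : v \in S -> only_vars S ('X_(avar i v) : P).
Proof.
move=> vS m; rewrite msuppX inE => /eqP -> i' j jS.
by rewrite mnm1E; case: eqP => // /enum_rank_inj [_ jv]; rewrite -jv vS in jS.
Qed.

(* [corr x y]: x lies in K_S and y is its image in K' under a_{i,j} |-> a'_{i,tau j}.
   The transported denominator is required to be nonzero so that the image is
   well defined. *)
Definition corr (x : Kf k d n) (y : Kf k d n') :=
  exists p q : P, [/\ only_vars S p, only_vars S q, q != 0, transport tau q != 0 &
     x = tf p / tf q /\ y = tf (transport tau p) / tf (transport tau q)].

Lemma corrD x y x2 y2 : corr x y -> corr x2 y2 -> corr (x + x2) (y + y2).
Proof.
move=> [p [q [hp hq q0 tq0 [-> ->]]]] [p2 [q2 [hp2 hq2 q20 tq20 [-> ->]]]].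
exists (p * q2 + p2 * q), (q * q2); split.
- by apply: only_varsD; apply: only_varsM.
- exact: only_varsM.
- by rewrite mulf_neq0.
- by rewrite transportM mulf_neq0.
split; first by rewrite addf_div ?tofrac_eq0 // !rmorphD !rmorphM.
by rewrite addf_div ?tofrac_eq0 // transportD !transportM !rmorphD !rmorphM.
Qed.

Lemma corrN x y : corr x y -> corr (- x) (- y).
Proof.
move=> [p [q [hp hq q0 tq0 [-> ->]]]]; exists (- p), q; split => //.
  exact: only_varsN.
by rewrite transportN !rmorphN !mulNr.
Qed.

Lemma corrM x y x2 y2 : corr x y -> corr x2 y2 -> corr (x * x2) (y * y2).
Proof.
move=> [p [q [hp hq q0 tq0 [-> ->]]]] [p2 [q2 [hp2 hq2 q20 tq20 [-> ->]]]].
exists (p * p2), (q * q2); split.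
- exact: only_varsM.
- exact: only_varsM.
- by rewrite mulf_neq0.
- by rewrite transportM mulf_neq0.
by split; rewrite mulf_div ?transportM !rmorphM.
Qed.

Lemma corrV x y : corr x y -> y != 0 -> corr x^-1 y^-1.
Proof.
move=> [p [q [hp hq q0 tq0 [-> ->]]]] y0.
have tp0 : transport tau p != 0.
  by apply: contraNneq y0 => ->; rewrite rmorph0 mul0r.
have p0 : p != 0.
  by apply: contraNneq tp0 => ->; rewrite -(rmorph0 (@mpolyC _ k)) transportC.
by exists q, p; split => //; rewrite !invf_div.
Qed.

Lemma corrC (c : k) : corr (tf (c%:MP)) (tf (c%:MP)).
Proof.
exists c%:MP, 1%:MP.
split; [exact: only_varsC | exact: only_varsC | | |];
  by rewrite ?transportC mpolyC1 ?oner_neq0 ?rmorph1 ?divr1.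
Qed.

Lemma corr0 : corr 0 0.
Proof. by have := corrC 0; rewrite mpolyC0 !rmorph0. Qed.

Lemma corr1 : corr 1 1.
Proof. by have := corrC 1; rewrite mpolyC1 !rmorph1. Qed.

Lemma corr_sign b : corr ((-1) ^+ b) ((-1) ^+ b).
Proof. by have := corrC ((-1) ^+ b); rewrite !rmorph_sign. Qed.

Lemma corr_a i v : v \in S -> corr (aK k i v) (aK k i (tau v)).
Proof.
move=> vS; exists 'X_(avar i v), 1%:MP.
split; [exact: only_varsXa | exact: only_varsC | | |];
  by rewrite ?transportC ?transportXa mpolyC1 ?oner_neq0 ?rmorph1 ?divr1.
Qed.

Lemma corr_eq0 x y : corr x y -> x = 0 -> y = 0.
Proof.
move=> [p [q [hp hq q0 tq0 [-> ->]]]] /eqP.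
rewrite mulf_eq0 invr_eq0 !tofrac_eq0 (negbTE q0) orbF => /eqP ->.
by rewrite -(rmorph0 (@mpolyC _ k)) transportC !rmorph0 mul0r.
Qed.

Lemma corr_sum (I : finType) (Pr : pred I) (F : I -> Kf k d n) F' :
  (forall i, Pr i -> corr (F i) (F' i)) ->
  corr (\sum_(i | Pr i) F i) (\sum_(i | Pr i) F' i).
Proof.
move=> h; elim/big_rec2: _ => [|i y1 y2 Pi r]; first exact: corr0.
by apply: corrD => //; apply: h.
Qed.

Lemma corr_prod (I : finType) (Pr : pred I) (F : I -> Kf k d n) F' :
  (forall i, Pr i -> corr (F i) (F' i)) ->
  corr (\prod_(i | Pr i) F i) (\prod_(i | Pr i) F' i).
Proof.
move=> h; elim/big_rec2: _ => [|i y1 y2 Pi r]; first exact: corr1.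
by apply: corrM => //; apply: h.
Qed.

Lemma corr_det m (A : 'M[Kf k d n]_m) (A' : 'M[Kf k d n']_m) :
  (forall i j, corr (A i j) (A' i j)) -> corr (\det A) (\det A').
Proof.
move=> h; apply: corr_sum => s _; apply: corrM; first exact: corr_sign.
by apply: corr_prod => i _; apply: h.
Qed.

Lemma corr_invmx m (A : 'M[Kf k d n]_m) (A' : 'M[Kf k d n']_m) :
  (forall i j, corr (A i j) (A' i j)) -> \det A' != 0 ->
  forall i j, corr (invmx A i j) (invmx A' i j).
Proof.
move=> h dA' i j; have hd := corr_det h.
have dA : \det A != 0 by apply: contraNneq dA' => /(corr_eq0 hd) ->.
rewrite /invmx !unitmxE !unitfE dA dA' /= !mxE.
apply: corrM; first exact: corrV.
apply: corrM; first exact: corr_sign.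
by apply: corr_det => a b; rewrite !mxE.
Qed.

End Transport.

Section Facets.
Variables (k : fieldType) (d n : nat) (D : {set {set 'I_n}}).
Hypothesis hm : homology_manifold k d D.

(* If the link of H had no vertex it would be {set0}, whose reduced homology
   in degree -1 does not vanish, while the link is a sphere of dimension
   d - |H| - 1 >= 0. *)
Lemma face_extend H : H \in D -> H != set0 -> (#|H| < d)%N ->
  exists2 v, v \notin H & v |: H \in D.
Proof.
case: hm => [[hsub _] hlink] HD H0 Hd.
have [/existsP [v /andP [vH vHD]]|/existsPn none] :=
  boolP [exists v, (v \notin H) && (v |: H \in D)]; first by exists v.
have := hlink H HD H0 0%N; rewrite /rhdim /= subrK.
have -> : (0%:Z == d%:Z - #|H|%:Z) = false.
  by apply/negbTE; rewrite eq_sym subr_eq0 eqz_nat neq_ltn Hd orbT.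
have no_vertex : #|faces_sz (link D H) 1| = 0%N.
  apply/eqP; rewrite cards_eq0; apply/eqP/setP => F; rewrite !inE.
  apply/negbTE/negP => /andP [/andP [FD /andP [dis FH]] /cards1P [v Fv]].
  subst F; move: (none v) dis; rewrite disjoints1 -[v |: H]/([set v] :|: H) FH.
  by case: (v \in H).
have r0 : \rank (bdmx k (link D H) 0) = 0%N.
  by apply/eqP; rewrite -leqn0; apply: leq_trans (rank_leq_row _) _; rewrite no_vertex.
rewrite r0 !subn0 => /eqP; rewrite cards_eq0 => /eqP/setP/(_ set0).
rewrite !inE cards0 eqxx set0U HD (hsub _ _ HD (sub0set _)) !andbT.
by rewrite -setI_eq0 set0I eqxx.
Qed.

Lemma face_sub_facet H : H \in D -> H != set0 -> (#|H| <= d)%N ->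
  exists2 F, facet d D F & H \subset F.
Proof.
move: {2}(d - #|H|)%N (erefl (d - #|H|)%N) => m.
elim: m H => [|m IH] H e HD H0 Hd.
  by exists H => //; rewrite /facet HD eqn_leq Hd -subn_eq0 e.
have [v vH vHD] : exists2 v, v \notin H & v |: H \in D.
  by apply: face_extend; rewrite // -subn_gt0 e.
have cv : #|v |: H| = #|H|.+1 by rewrite cardsU1 vH.
have [|||F fF vHF] := IH (v |: H) _ vHD.
- by rewrite cv subnS e.
- by apply/set0Pn; exists v; rewrite setU11.
- by rewrite cv -subn_gt0 e.
by exists F => //; apply: subset_trans vHF; apply: subsetUr.
Qed.

End Facets.

Section Positions.
Variable n : nat.
Implicit Types (F : {set 'I_n}) (u v : 'I_n).

Lemma pos_lt F v : v \in F -> (pos F v < #|F|)%N.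
Proof.
move=> vF; apply/proper_card/properP; split.
  by apply/subsetP => u; rewrite inE => /andP [].
by exists v; rewrite ?inE ?ltnn ?andbF.
Qed.

Lemma pos_mono F u v : u \in F -> (u < v)%N -> (pos F u < pos F v)%N.
Proof.
move=> uF uv; apply/proper_card/properP; split.
  by apply/subsetP => w; rewrite !inE => /andP [-> /ltn_trans->].
by exists u; rewrite !inE ?uF ?uv ?ltnn ?andbF.
Qed.

Lemma pos_ltE F u v : u \in F -> v \in F -> (pos F u < pos F v)%N = (u < v)%N.
Proof.
move=> uF vF; case: (ltngtP u v) => [uv|vu|/val_inj ->]; last by rewrite ltnn.
- exact: pos_mono.
- by apply/negbTE; rewrite -leqNgt ltnW // pos_mono.
Qed.

Lemma pos_inj F u v : u \in F -> v \in F -> pos F u = pos F v -> u = v.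
Proof.
move=> uF vF e; case: (ltngtP u v) => [uv|vu|/val_inj //].
- by move: (pos_mono uF uv); rewrite e ltnn.
- by move: (pos_mono vF vu); rewrite e ltnn.
Qed.

Lemma pos_surj F m : (m < #|F|)%N -> exists2 v, v \in F & pos F v = m.
Proof.
have posF : {in enum F &, injective (pos F)}.
  by move=> u v; rewrite !mem_enum; apply: pos_inj.
have [|||_ onto] := @uniq_min_size _ [seq pos F v | v <- enum F] (iota 0 #|F|).
- by rewrite map_inj_in_uniq ?enum_uniq.
- by move=> _ /mapP [v vF ->]; rewrite mem_iota pos_lt // -mem_enum.
- by rewrite size_map size_iota -cardE.
move=> mF; have /mapP [v vF ->] : m \in [seq pos F v | v <- enum F].
  by rewrite onto mem_iota.
by exists v => //; rewrite -mem_enum.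
Qed.

(* [v0] is a junk value, returned when [m >= #|F|]. *)
Definition vert_at F (v0 : 'I_n) (m : nat) : 'I_n :=
  odflt v0 [pick v in F | pos F v == m].

Lemma vert_at_spec F v0 m : (m < #|F|)%N ->
  vert_at F v0 m \in F /\ pos F (vert_at F v0 m) = m.
Proof.
move=> /pos_surj [v vF vm]; rewrite /vert_at.
by case: pickP => [u /andP [uF /eqP ->] //|/(_ v)]; rewrite vF vm eqxx.
Qed.

Lemma vert_atK F v0 v : v \in F -> vert_at F v0 (pos F v) = v.
Proof.
by move=> vF; have [uF /pos_inj] := vert_at_spec v0 (pos_lt vF); apply.
Qed.

Lemma sum_pos_eq (R : nmodType) F v0 (g : 'I_n -> R) m : (m < #|F|)%N ->
  \sum_(v in F | pos F v == m) g v = g (vert_at F v0 m).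
Proof.
move=> mF; have [uF um] := vert_at_spec v0 mF.
rewrite (big_pred1 (vert_at F v0 m)) // => v /=; apply/andP/eqP => [[vF /eqP vm]|->].
  by apply: pos_inj vF uF _; rewrite um.
by rewrite uF um.
Qed.

Section FixedSize.
Variables (d : nat) (F : {set 'I_n}) (v0 : 'I_n).
Hypothesis cardF : #|F| = d.

Lemma vert_at_in (m : 'I_d) : vert_at F v0 m \in F.
Proof. by case: (vert_at_spec v0 (_ : (m < #|F|)%N)); rewrite ?cardF. Qed.

Lemma pos_vert_at (m : 'I_d) : pos F (vert_at F v0 m) = m.
Proof. by case: (vert_at_spec v0 (_ : (m < #|F|)%N)); rewrite ?cardF. Qed.

Lemma vert_at_inj : injective (fun m : 'I_d => vert_at F v0 m).
Proof. by move=> i j /(congr1 (pos F)); rewrite !pos_vert_at => /val_inj. Qed.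

Lemma vert_at_onto v : v \in F -> exists m : 'I_d, vert_at F v0 m = v.
Proof.
move=> vF; have vd := pos_lt vF; rewrite cardF in vd.
by exists (Ordinal vd); apply: vert_atK.
Qed.

End FixedSize.
End Positions.

Definition inv_count N (s : 'S_N) : nat :=
  \sum_(i : 'I_N) \sum_(j : 'I_N) ((i < j)%N && (s j < s i)%N : nat).

Lemma ltn_lift N (h : 'I_N.+1) (x : 'I_N) : (lift h x < h)%N = (x < h)%N.
Proof. by rewrite /= /bump; case: leqP => hx /=; lia. Qed.

Lemma ltn_lift2 N (h : 'I_N.+1) (x y : 'I_N) : (lift h x < lift h y)%N = (x < y)%N.
Proof. by rewrite /= !ltnNge leq_bump2. Qed.

Lemma sum_ord_ltn N j : (j <= N)%N -> \sum_(i < N) ((i < j)%N : nat) = j.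
Proof.
move=> jN; suff -> : forall M, \sum_(i < M) ((i < j)%N : nat) = minn j M by apply/minn_idPl.
elim=> [|M IH]; first by rewrite big_ord0 minn0.
rewrite big_ord_recr /= IH /minn.
by case: (ltnP j M) => h1; case: (ltnP M j) => h2 //=; case: (ltnP j M.+1) => h3 //; lia.
Qed.

Lemma odd_perm_inv_count N (s : 'S_N) : odd_perm s = odd (inv_count s).
Proof.
elim: N s => [|N IH] s.
  have -> : s = 1%g by apply/permP => -[].
  by rewrite odd_perm1 /inv_count big_ord0.
pose j := s ord0.
have nj x : s (lift ord0 x) != j by rewrite (inj_eq perm_inj) eq_sym neq_lift.
pose f x := odflt x (unlift j (s (lift ord0 x))).
have fE x : lift j (f x) = s (lift ord0 x).
  by rewrite /f; case: unliftP => [y -> //|sx]; move: (nj x); rewrite sx eqxx.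
have finj : injective f.
  by move=> x y fxy; apply: (@lift_inj _ ord0); apply: (@perm_inj _ s); rewrite -!fE fxy.
pose s' := perm finj.
have sE : s = lift_perm ord0 j s'.
  apply/permP => i; case: (unliftP ord0 i) => [x ->|->]; last by rewrite lift_perm_id.
  by rewrite lift_perm_lift permE fE.
have countE : inv_count s = (inv_count s' + j)%N.
  rewrite /inv_count big_ord_recl big_ord_recl /= add0n addnC; congr (_ + _)%N.
    apply: eq_bigr => x _; rewrite big_ord_recl /=.
    by apply: eq_bigr => y _; rewrite -!fE ltn_lift2 !permE /bump /= !add1n ltnS.
  rewrite (eq_bigr (fun x => (s' x < j)%N : nat)) => [|x _]; last by rewrite permE -fE ltn_lift.
  rewrite (reindex_inj (@perm_inj _ s'^-1)) /=.
  under eq_bigr => x _ do rewrite permKV.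
  by rewrite sum_ord_ltn // -ltnS.
by rewrite {1}sE odd_lift_perm /= IH countE oddD addbC.
Qed.

Section GenericMatrices.
Variables (k : fieldType) (d N : nat).

Definition amx (f : 'I_d -> 'I_N) : 'M[Kf k d N]_d := \matrix_(i, m) aK k i (f m).

(* Specializing a_{i,v} to [v == f i] turns [amx f] into the identity. *)
Lemma det_amx_neq0 f : injective f -> \det (amx f) != 0.
Proof.
move=> finj; pose M0 : 'M[{mpoly k[NV d N]}]_d := \matrix_(i, m) 'X_(avar i (f m)).
have -> : amx f = map_mx (@FracField.tofrac _) M0 by apply/matrixP => i m; rewrite !mxE.
rewrite det_map_mx tofrac_eq0.
pose ev (v : 'I_(NV d N)) : k := ((enum_val v).2 == f (enum_val v).1)%:R.
have : meval ev (\det M0) = 1.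
  rewrite -det_map_mx -(det1 _ d); congr (\det _); apply/matrixP => i m.
  rewrite !mxE; change (meval ev ('X_(avar i (f m))) = (i == m)%:R).
  rewrite mevalXU /ev /avar enum_rankK /= (inj_eq finj) eq_sym.
  by case: (i == m).
by apply: contra_eq_neq => ->; rewrite meval0 eq_sym oner_eq0.
Qed.

Lemma dual_coef f : injective f -> forall m u : 'I_d,
  \sum_i invmx (amx f) m i * aK k i (f u) = (m == u)%:R.
Proof.
move=> /det_amx_neq0 dA m u; have Au : amx f \in unitmx by rewrite unitmxE unitfE.
have := mulVmx Au; move/matrixP/(_ m u); rewrite !mxE => <-.
by apply: eq_bigr => i _; rewrite mxE.
Qed.

Lemma dual_coef_img f : injective f -> forall (m : 'I_d) v, (exists u, f u = v) ->
  \sum_i invmx (amx f) m i * aK k i v = (v == f m)%:R.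
Proof. by move=> finj m _ [u <-]; rewrite dual_coef // (inj_eq finj) eq_sym. Qed.

End GenericMatrices.

Lemma detF_amx (k : fieldType) d n (F : {set 'I_n}) v0 : #|F| = d ->
  detF k d F = \det (amx k (fun m : 'I_d => vert_at F v0 m)).
Proof.
move=> cardF; congr (\det _); apply/matrixP => i m; rewrite !mxE.
by apply: sum_pos_eq; rewrite cardF.
Qed.

Lemma detF_neq0 (k : fieldType) d n (F : {set 'I_n}) : #|F| = d -> detF k d F != 0.
Proof.
case: d => [|d] cardF; first by rewrite /detF det_mx00 oner_neq0.
have /card_gt0P [v0 _] : (0 < #|F|)%N by rewrite cardF.
by rewrite (detF_amx k v0 cardF) det_amx_neq0 //; apply: vert_at_inj.
Qed.

Section Relabel.
Variables (k : fieldType) (d n n' : nat) (tau : 'I_n -> 'I_n').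
Variables (F : {set 'I_n}) (v0 : 'I_n).
Hypotheses (cardF : #|F| = d) (tauF : {in F &, injective tau}).
Local Notation fv := (fun m : 'I_d => vert_at F v0 m).

Lemma inversions_inv_count (pi : 'S_d) :
  (forall m, pos (tau @: F) (tau (fv m)) = pi m) -> inversions tau F = inv_count pi.
Proof.
move=> piE; pose g (u v : 'I_n) := ((u < v)%N && (tau v < tau u)%N : nat).
have countE : inv_count pi = \sum_(i : 'I_d) \sum_(j : 'I_d) g (fv i) (fv j).
  apply: eq_bigr => i _; apply: eq_bigr => j _; rewrite /g -!piE.
  have [Fi Fj] := (vert_at_in v0 cardF i, vert_at_in v0 cardF j).
  by rewrite (pos_ltE (imset_f tau Fj) (imset_f tau Fi)) -(pos_ltE Fi Fj) !pos_vert_at.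
have imF : [set fv i | i : 'I_d] = F.
  apply/eqP; rewrite eqEcard card_imset ?card_ord ?cardF ?leqnn ?andbT; last first.
    exact: vert_at_inj.
  by apply/subsetP => x /imsetP [i _ ->]; apply: vert_at_in.
have reindex (h : 'I_n -> nat) : \sum_(u in F) h u = \sum_(i : 'I_d) h (fv i).
  by rewrite -[in LHS]imF big_imset //= => a b _ _; apply: vert_at_inj.
have pairsE :
    \sum_(i : 'I_d) \sum_(j : 'I_d) g (fv i) (fv j) = \sum_(u in F) \sum_(v in F) g u v.
  by rewrite reindex; apply: eq_bigr => i _; rewrite reindex.
rewrite countE pairsE.
rewrite /inversions -sum1_card pair_big /= big_mkcond [RHS]big_mkcond /=.
apply: eq_bigr => -[u v] _; rewrite in_set in_setX /g /=.
by case: (u \in F); case: (v \in F); case: (u < v)%N; case: (tau v < tau u)%N.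
Qed.

Lemma det_amx_relabel :
  \det (amx k (fun m : 'I_d => tau (fv m))) = (-1) ^+ inversions tau F * detF k d (tau @: F).
Proof.
set F' := tau @: F; have cardF' : #|F'| = d by rewrite card_in_imset.
rewrite (detF_amx k (tau v0) cardF').
have inF' (m : 'I_d) : tau (fv m) \in F' by apply/imset_f/vert_at_in.
have pos_lt_d (m : 'I_d) : (pos F' (tau (fv m)) < d)%N.
  by have := pos_lt (inF' m); rewrite cardF'.
have pinj : injective (fun m => Ordinal (pos_lt_d m)).
  move=> i j /(congr1 val) /= /(pos_inj (inF' i) (inF' j)).
  by move/tauF => /(_ (vert_at_in v0 cardF i) (vert_at_in v0 cardF j)); apply: vert_at_inj.
pose pi := perm pinj.
have piE m : pos F' (tau (fv m)) = pi m by rewrite permE.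
have -> : amx k (fun m : 'I_d => tau (fv m)) =
          col_perm pi (amx k (fun m : 'I_d => vert_at F' (tau v0) m)).
  by apply/matrixP => i m; rewrite !mxE -piE vert_atK.
rewrite col_permE det_mulmx det_perm odd_permV mulrC.
by rewrite (inversions_inv_count piE) odd_perm_inv_count signr_odd.
Qed.

End Relabel.

Definition supp N (b : 'I_N -> nat) : {set 'I_N} := [set v | (0 < b v)%N].

Definition monomial (R : ringType) N n (iota : 'I_N -> 'I_n) (b : 'I_N -> nat)
  : {mpoly R[n]} :=
  \prod_v 'X_(iota v) ^+ b v.
Arguments monomial {R N n} iota b.

Definition dec_at N (b : 'I_N -> nat) (w : 'I_N) : 'I_N -> nat :=
  fun v => (b v - (v == w))%N.

Lemma sum_indicator N (H : {set 'I_N}) : (\sum_v ((v \in H) : nat))%N = #|H|.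
Proof. by rewrite -sum1_card [RHS]big_mkcond; apply: eq_bigr => v _; case: (v \in H). Qed.

Lemma sum_delta N (u : 'I_N) : (\sum_v ((v == u) : nat))%N = 1%N.
Proof. by rewrite (bigD1 u) //= eqxx big1 // => v /negbTE ->. Qed.

Lemma card_supp_le N (b : 'I_N -> nat) : (#|supp b| <= \sum_v b v)%N.
Proof. by rewrite -sum_indicator leq_sum // => v _; rewrite inE; case: (b v). Qed.

Lemma supp_dec_at N (b : 'I_N -> nat) w : (1 < b w)%N -> supp (dec_at b w) = supp b.
Proof.
move=> bw; apply/setP => v; rewrite !inE /dec_at.
by case: eqP => [->|_]; rewrite ?subn0 // subn_gt0 bw ltnW.
Qed.

Lemma sum_dec_at N (b : 'I_N -> nat) w : (0 < b w)%N ->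
  (1 + \sum_v dec_at b w v)%N = (\sum_v b v)%N.
Proof.
move=> bw; rewrite -(sum_delta w) -big_split; apply: eq_bigr => v _ /=.
by rewrite /dec_at; case: eqP => [->|_]; rewrite ?subn0 // subnKC.
Qed.

Lemma card_supp_lt N (b : 'I_N -> nat) w : (1 < b w)%N -> (#|supp b| < \sum_v b v)%N.
Proof.
move=> bw; rewrite -(sum_dec_at (ltnW bw)) -(supp_dec_at bw) add1n ltnS.
exact: card_supp_le.
Qed.

Lemma supp_dec_at_add N (b : 'I_N -> nat) w v : (1 < b w)%N ->
  supp (fun u => dec_at b w u + (u == v))%N = v |: supp b.
Proof.
move=> bw; apply/setP => u; rewrite in_setU1 -(supp_dec_at bw) !inE.
by case: eqP => [->|_]; rewrite ?addn1 ?addn0.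
Qed.

Lemma sum_dec_at_add N (b : 'I_N -> nat) w v : (0 < b w)%N ->
  (\sum_u (dec_at b w u + (u == v)))%N = (\sum_u b u)%N.
Proof. by move=> bw; rewrite big_split /= sum_delta addnC sum_dec_at. Qed.

Section Monomials.
Variables (R : comRingType) (N n : nat) (iota : 'I_N -> 'I_n).
Local Notation mon := (@monomial R N n iota).

Lemma monomial_eq b1 b2 : b1 =1 b2 -> mon b1 = mon b2.
Proof. by move=> e; apply: eq_bigr => v _; rewrite e. Qed.

Lemma monomialD b1 b2 : mon (fun v => b1 v + b2 v)%N = mon b1 * mon b2.
Proof. by rewrite /monomial -big_split; apply: eq_bigr => v _; rewrite exprD. Qed.

Lemma monomial_delta u : mon (fun v => (v == u) : nat) = 'X_(iota u).
Proof. by rewrite /monomial (bigD1 u) //= eqxx expr1 big1 ?mulr1 // => v /negbTE ->. Qed.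

Lemma monomial_indicator (H : {set 'I_N}) : {in H &, injective iota} ->
  mon (fun v => (v \in H) : nat) = \prod_(u in iota @: H) 'X_u.
Proof.
move=> inj; rewrite big_imset //= /monomial [RHS]big_mkcond /=.
by apply: eq_bigr => v _; case: (v \in H); rewrite ?expr1 ?expr0.
Qed.

Lemma monomial_dec_at b w : (0 < b w)%N -> mon b = 'X_(iota w) * mon (dec_at b w).
Proof.
move=> bw; rewrite -monomial_delta -monomialD; apply: monomial_eq => v.
by rewrite /dec_at; case: eqP => [->|_]; rewrite ?subn0 // subnKC.
Qed.

Lemma X_mul_monomial b u : 'X_(iota u) * mon b = mon (fun v => b v + (v == u))%N.
Proof. by rewrite monomialD monomial_delta mulrC. Qed.

Lemma monomial_push s (j : 'I_s -> 'I_N) (b : 'I_s -> nat) :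
  mon (fun v => \sum_(m | j m == v) b m)%N = \prod_(m < s) 'X_(iota (j m)) ^+ b m.
Proof.
rewrite /monomial (partition_big j xpredT) //=; apply: eq_bigr => v _.
by rewrite expr_sum; apply: eq_bigr => m /eqP ->.
Qed.

Lemma homog_deg0 e : homog_deg e (0 : {mpoly R[n]}).
Proof. by apply/allP => m; rewrite msupp0. Qed.

Lemma homog_degD e (p q : {mpoly R[n]}) :
  homog_deg e p -> homog_deg e q -> homog_deg e (p + q).
Proof.
move=> /allP hp /allP hq; apply/allP => m /msuppD_le.
by rewrite mem_cat => /orP [/hp|/hq].
Qed.

Lemma homog_degZ e c (p : {mpoly R[n]}) : homog_deg e p -> homog_deg e (c *: p).
Proof. by move=> /allP hp; apply/allP => m /msuppZ_le /hp. Qed.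

Lemma homog_degM e1 e2 (p q : {mpoly R[n]}) :
  homog_deg e1 p -> homog_deg e2 q -> homog_deg (e1 + e2) (p * q).
Proof.
move=> /allP hp /allP hq; apply/allP => m /msuppM_le /allpairsP [[m1 m2] /= [h1 h2 ->]].
by rewrite mdegD (eqP (hp _ h1)) (eqP (hq _ h2)).
Qed.

Lemma homog_deg_sum (I : finType) (Pr : pred I) (f : I -> {mpoly R[n]}) e :
  (forall i, Pr i -> homog_deg e (f i)) -> homog_deg e (\sum_(i | Pr i) f i).
Proof.
move=> h; elim/big_rec: _ => [|i x Pi hx]; first exact: homog_deg0.
by apply: homog_degD => //; apply: h.
Qed.

Lemma homog_degX v : homog_deg 1 ('X_v : {mpoly R[n]}).
Proof. by apply/allP => m; rewrite msuppX inE => /eqP ->; rewrite mdeg1. Qed.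

Lemma homog_deg1 : homog_deg 0 (1 : {mpoly R[n]}).
Proof. by apply/allP => m; rewrite msupp1 inE => /eqP ->; rewrite mdeg0. Qed.

Lemma homog_degXn v e : homog_deg e ('X_v ^+ e : {mpoly R[n]}).
Proof.
elim: e => [|e IH]; first by rewrite expr0 homog_deg1.
by rewrite exprS -add1n; apply: homog_degM IH; apply: homog_degX.
Qed.

Lemma homog_monomial b : homog_deg (\sum_v b v) (mon b).
Proof.
rewrite /monomial; elim/big_rec2: _ => [|v e x _ hx]; first exact: homog_deg1.
by apply: homog_degM hx; apply: homog_degXn.
Qed.

End Monomials.

Section Ideal.
Variables (k : fieldType) (d n : nat) (D : {set {set 'I_n}}).
Local Notation P := {mpoly (Kf k d n)[n]}.
Local Notation inJ := (@in_J k d n D).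

Lemma in_J0 : inJ 0.
Proof. by exists (fun _ => 0), (fun _ => 0); rewrite !big1 ?addr0 // => *; rewrite mul0r. Qed.

Lemma in_JD (p q : P) : inJ p -> inJ q -> inJ (p + q).
Proof.
move=> [r1 [s1 ->]] [r2 [s2 ->]]; exists (fun F => r1 F + r2 F), (fun i => s1 i + s2 i).
by rewrite addrACA -!big_split; congr (_ + _); apply: eq_bigr => *; rewrite mulrDl.
Qed.

Lemma in_JMl (q p : P) : inJ p -> inJ (q * p).
Proof.
move=> [r [s ->]]; exists (fun F => q * r F), (fun i => q * s i).
by rewrite mulrDr !mulr_sumr; congr (_ + _); apply: eq_bigr => *; rewrite mulrA.
Qed.

Lemma in_J_sum (I : finType) (Pr : pred I) (f : I -> P) :
  (forall i, Pr i -> inJ (f i)) -> inJ (\sum_(i | Pr i) f i).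
Proof.
move=> h; elim/big_rec: _ => [|i x Pi hx]; first exact: in_J0.
by apply: in_JD => //; apply: h.
Qed.

Lemma in_J_xF F : F \notin D -> inJ (xF k d F).
Proof.
move=> FD; exists (fun E => (E == F)%:R), (fun _ => 0).
rewrite [X in _ + X]big1 ?addr0 => [|*]; last by rewrite mul0r.
by rewrite (bigD1 F) //= eqxx mul1r big1 ?addr0 // => E /andP [_ /negbTE ->]; rewrite mul0r.
Qed.

Lemma in_J_theta i : inJ (theta k n i).
Proof.
exists (fun _ => 0), (fun j => (j == i)%:R).
rewrite big1 ?add0r => [|*]; last by rewrite mul0r.
by rewrite (bigD1 i) //= eqxx mul1r big1 ?addr0 // => j /negbTE ->; rewrite mul0r.
Qed.

Lemma in_J_X_monomial N (iota : 'I_N -> 'I_n) b v' :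
  {in supp b &, injective iota} -> v' \notin iota @: supp b ->
  v' |: iota @: supp b \notin D -> inJ ('X_v' * monomial iota b).
Proof.
move=> inj nH nD; pose b1 v := (b v - (v \in supp b))%N.
have -> : monomial iota b =
           monomial iota b1 * monomial iota (fun v => (v \in supp b) : nat) :> P.
  rewrite -monomialD; apply: monomial_eq => v; rewrite /b1 subnK //.
  by rewrite inE; case: (b v).
by rewrite monomial_indicator // mulrCA; apply: in_JMl; rewrite -big_setU1 //; apply: in_J_xF.
Qed.

End Ideal.

Section Reduction.
Variables (k : fieldType) (d n : nat) (D : {set {set 'I_n}}) (eps : {set 'I_n} -> bool).
Variable phi : {mpoly (Kf k d n)[n]} -> Kf k d n.
Hypothesis hphi : is_deg_map D eps phi.
Local Notation K := (Kf k d n).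
Local Notation P := {mpoly K[n]}.

Lemma deg_map0 : phi 0 = 0.
Proof. by case: hphi => phiD _ _ _; apply: (addrI (phi 0)); rewrite -phiD !addr0. Qed.

Lemma deg_map_sum (I : finType) (Pr : pred I) (f : I -> P) :
  phi (\sum_(i | Pr i) f i) = \sum_(i | Pr i) phi (f i).
Proof. by case: hphi => phiD _ _ _; apply: (big_morph phi phiD deg_map0). Qed.

Lemma theta_comb (c : 'I_d -> K) :
  \sum_i (c i)%:MP * theta k n i = \sum_v (\sum_i c i * aK k i v)%:MP * 'X_v.
Proof.
under eq_bigr => i _ do rewrite /theta mulr_sumr.
rewrite exchange_big; apply: eq_bigr => v _ /=.
by rewrite rmorph_sum mulr_suml; apply: eq_bigr => i _; rewrite mulrA -rmorphM.
Qed.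

Lemma X_theta_comb (Fs : {set 'I_n}) u (c : 'I_d -> K) : u \in Fs ->
  (forall v, v \in Fs -> \sum_i c i * aK k i v = (v == u)%:R) ->
  'X_u = \sum_i (c i)%:MP * theta k n i
          - \sum_(v | v \notin Fs) (\sum_i c i * aK k i v)%:MP * 'X_v.
Proof.
move=> uFs hc; rewrite theta_comb (bigID (mem Fs)) /= addrK (bigD1 u) //= hc // eqxx.
rewrite rmorph1 mul1r big1 ?addr0 // => v /andP [vFs vu].
by rewrite hc // (negbTE vu) rmorph0 mul0r.
Qed.

(* With m = x^b / x_{iota w}, x^b = (sum_i c_i theta_i) m - sum_{v not in Fs} gamma_v x_v m,
   and the terms whose support is not a face lie in I_Delta. *)
Lemma deg_map_reduce N (iota : 'I_N -> 'I_n) b w (Fs : {set 'I_n}) (c : 'I_d -> K) :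
  {in supp b &, injective iota} -> iota @: supp b \subset Fs ->
  (1 < b w)%N -> (\sum_v b v)%N = d ->
  (forall v, v \in Fs -> \sum_i c i * aK k i v = (v == iota w)%:R) ->
  phi (monomial iota b) = - \sum_(v | (v \notin Fs) && (v |: iota @: supp b \in D))
        (\sum_i c i * aK k i v) * phi ('X_v * monomial iota (dec_at b w)).
Proof.
move=> inj HFs bw sumb hc; have [phiD phiZ phiJ _] := hphi.
have b0 : (0 < b w)%N := ltnW bw.
set H := supp b; set m0 : P := monomial iota (dec_at b w).
set ga := fun v => \sum_i c i * aK k i v.
have wFs : iota w \in Fs by apply/(subsetP HFs)/imset_f; rewrite inE.
pose faces := \sum_(v | (v \notin Fs) && (v |: iota @: H \in D)) ga v *: ('X_v * m0).
pose nonfaces :=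
  \sum_(v | (v \notin Fs) && (v |: iota @: H \notin D)) (ga v)%:MP * 'X_v * m0.
have relE : monomial iota b + faces = (\sum_i (c i)%:MP * theta k n i) * m0 - nonfaces.
  rewrite (monomial_dec_at _ _ b0) (X_theta_comb wFs hc) mulrBl mulr_suml.
  rewrite (bigID (fun v => v |: iota @: H \in D)) /= mulrDl !mulr_suml /faces /nonfaces.
  under [X in _ + X = _]eq_bigr => v _ do rewrite -mul_mpolyC mulrA.
  by rewrite /ga /m0; ring.
have inJrel : in_J D (monomial iota b + faces).
  rewrite relE; apply: in_JD.
    by rewrite mulr_suml; apply: in_J_sum => i _; rewrite mulrAC; apply/in_JMl/in_J_theta.
  rewrite -mulN1r; apply: in_JMl; apply: in_J_sum => v /andP [vFs vD].
  rewrite -mulrA; apply: in_JMl; apply: in_J_X_monomial; rewrite ?supp_dec_at //.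
  by apply: contra vFs; apply: (subsetP HFs).
have homrel : homog_deg d (monomial iota b + faces).
  apply: homog_degD; first by rewrite -sumb homog_monomial.
  apply: homog_deg_sum => v _; apply: homog_degZ.
  have := homog_degM (homog_degX K v) (homog_monomial K iota (dec_at b w)).
  by rewrite (sum_dec_at b0) sumb.
move: (phiJ _ homrel inJrel); rewrite phiD [phi faces]deg_map_sum.
move=> /eqP; rewrite addr_eq0 => /eqP ->.
by congr (- _); apply: eq_bigr => v _; rewrite phiZ.
Qed.

End Reduction.

Section StarIso.
Variables (n n' : nat) (D : {set {set 'I_n}}) (D' : {set {set 'I_n'}}).
Variables (G : {set 'I_n}) (tau : 'I_n -> 'I_n').
Implicit Types H F : {set 'I_n}.
Hypotheses (cxD : is_complex D) (cxD' : is_complex D').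
Hypothesis iso : star_iso D D' G (tau @: G) tau.
Local Notation S := (star_verts D G).

Lemma star_inj : {in S &, injective tau}.
Proof. by case: iso. Qed.

Lemma face_sub_star_verts H : H \in D -> G \subset H -> H \subset S.
Proof.
case: cxD => down_closed _ HD GH; apply/subsetP => v vH; rewrite inE.
by apply: down_closed HD _; rewrite subUset sub1set vH.
Qed.

Lemma star_face H : H \in D -> G \subset H -> H \in star D G.
Proof. by move=> HD GH; rewrite inE HD (setUidPl GH) HD. Qed.

Lemma tau_face H : H \in D -> G \subset H -> tau @: H \in D'.
Proof.
move=> HD GH; case: iso => _ _ starE; move: (star_face HD GH).
by rewrite (starE _ (face_sub_star_verts HD GH)) inE => /andP [].
Qed.

Lemma tau_face_inv H : H \subset S -> G \subset H -> tau @: H \in D' -> H \in D.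
Proof.
move=> HS GH tHD; case: iso => _ _ starE.
suff : tau @: H \in star D' (tau @: G) by rewrite -starE // inE => /andP [].
by rewrite inE tHD (setUidPl _) ?tHD // imsetS.
Qed.

Lemma link_vertex_in_star H v : v |: H \in D -> G \subset H -> v \in S.
Proof.
move=> vHD GH; apply: (subsetP (face_sub_star_verts vHD _)); last exact: setU11.
by apply: subset_trans GH _; apply: subsetUr.
Qed.

Lemma tau_neighbours H F : H \in D -> G \subset H -> H \subset F -> F \in D ->
  [set v' | (v' \notin tau @: F) && (v' |: tau @: H \in D')] =
  tau @: [set v | (v \notin F) && (v |: H \in D)].
Proof.
move=> HD GH HF FD; have FS := face_sub_star_verts FD (subset_trans GH HF).
apply/setP => v'; rewrite inE; apply/andP/imsetP => [[vF vHD]|[v]].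
  have : v' \in star_verts D' (tau @: G).
    case: cxD' => down_closed _; rewrite inE; apply: down_closed vHD _.
    by rewrite setUS // imsetS.
  case: iso => _ <- _ /imsetP [v vS v'E]; subst v'.
  have vHS : v |: H \subset S by rewrite subUset sub1set vS face_sub_star_verts.
  exists v => //; rewrite inE; apply/andP; split.
    by apply: contra vF; apply: imset_f.
  by apply: tau_face_inv vHS _ _; rewrite ?imsetU1 // (subset_trans GH) ?subsetUr.
rewrite inE => /andP [vF vHD] ->; split; last first.
  by rewrite -imsetU1; apply: tau_face vHD _; rewrite (subset_trans GH) ?subsetUr.
have vS := link_vertex_in_star vHD GH.
apply/imsetP => -[u uF /star_inj]; move=> /(_ vS (subsetP FS u uF)) vu.
by rewrite vu uF in vF.
Qed.

End StarIso.

Section Transfer.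
Variables (k : fieldType) (d n n' : nat) (D : {set {set 'I_n}}) (D' : {set {set 'I_n'}}).
Variables (eps : {set 'I_n} -> bool) (eps' : {set 'I_n'} -> bool).
Variables (G : {set 'I_n}) (tau : 'I_n -> 'I_n') (e : bool) (v0 : 'I_n).
Variable phi : {mpoly (Kf k d n)[n]} -> Kf k d n.
Variable phi' : {mpoly (Kf k d n')[n']} -> Kf k d n'.
Hypotheses (hm : homology_manifold k d D) (cxD' : is_complex D').
Hypothesis iso : star_iso D D' G (tau @: G) tau.
Hypothesis orient : forall F, facet d D F -> G \subset F ->
  (-1) ^+ eps F = (-1) ^+ e * (-1) ^+ (eps' (tau @: F) + inversions tau F) :> k.
Hypotheses (hphi : is_deg_map D eps phi) (hphi' : is_deg_map D' eps' phi').

Local Notation S := (star_verts D G).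
Local Notation corrS := (@corr k d n n' tau S).
Let cxD : is_complex D := proj1 hm.

Definition deg_corr (b : 'I_n -> nat) : Prop :=
  corrS (phi (monomial (fun v => v) b)) ((-1) ^+ e * phi' (monomial tau b)).

Lemma facet_in_star F : facet d D F -> G \subset F ->
  [/\ #|F| = d, F \subset S & {in F &, injective tau}].
Proof.
move=> /andP [FD /eqP cardF] GF; have FS := face_sub_star_verts cxD FD GF.
by split => // u v uF vF; apply: (star_inj iso); apply: (subsetP FS).
Qed.

Lemma corr_detF F : facet d D F -> G \subset F ->
  corrS (detF k d F) ((-1) ^+ inversions tau F * detF k d (tau @: F)).
Proof.
move=> fF GF; have [cardF FS tauF] := facet_in_star fF GF.
rewrite (detF_amx k v0 cardF) -(det_amx_relabel k v0 cardF tauF).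
by apply: corr_det => i m; rewrite !mxE; apply/corr_a/(subsetP FS)/vert_at_in.
Qed.

Lemma corr_deg_facet F : facet d D F -> G \subset F ->
  corrS (phi (xF k d F)) ((-1) ^+ e * phi' (xF k d (tau @: F))).
Proof.
move=> fF GF; have [cardF FS tauF] := facet_in_star fF GF.
have cardF' : #|tau @: F| = d by rewrite card_in_imset.
have fF' : facet d D' (tau @: F).
  by rewrite /facet cardF' eqxx andbT (tau_face cxD iso) //; case/andP: fF.
case: hphi => _ _ _ -> //; case: hphi' => _ _ _ -> //.
have signE : (-1) ^+ eps F = (-1) ^+ e * (-1) ^+ (eps' (tau @: F) + inversions tau F)
    :> Kf k d n'.
  have := congr1 (fun c : k => FracField.tofrac (c%:MP : {mpoly k[NV d n']})) (orient fF GF).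
  by rewrite /= !rmorphM !rmorph_sign.
pose s : Kf k d n' := (-1) ^+ inversions tau F; set x := detF k d (tau @: F).
suff -> : (-1) ^+ e * ((-1) ^+ eps' (tau @: F) / x) = (-1) ^+ eps F * (s * x)^-1.
  apply: corrM; first exact: corr_sign.
  by apply: corrV; [exact: corr_detF | rewrite mulf_neq0 ?signr_eq0 ?detF_neq0].
have ss : s * s = 1 by rewrite -expr2 sqrr_sign.
by rewrite signE exprD invfM invr_sign -!mulrA [s * (s * _)]mulrA ss mul1r.
Qed.

Lemma corr_deg_squarefree b : supp b \in D -> G \subset supp b -> (\sum_v b v)%N = d ->
  (forall w, b w <= 1)%N -> deg_corr b.
Proof.
set H := supp b => HD GH sumb sqf.
have bE : b =1 (fun v => (v \in H) : nat).
  by move=> v; move: (sqf v); rewrite inE; case: (b v) => [|[|]].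
have cardH : #|H| = d by rewrite -sum_indicator -sumb; apply: eq_bigr => v _; rewrite bE.
have fH : facet d D H by rewrite /facet HD cardH eqxx.
have [_ _ tauH] := facet_in_star fH GH.
rewrite /deg_corr !(monomial_eq _ _ bE) !monomial_indicator // imset_id.
exact: corr_deg_facet.
Qed.

Lemma facet_dual_coef F w : facet d D F -> G \subset F -> w \in F ->
  exists c c' : 'I_d -> _,
    [/\ forall v, v \in F -> \sum_i c i * aK k i v = (v == w)%:R,
        forall v', v' \in tau @: F -> \sum_i c' i * aK k i v' = (v' == tau w)%:R
      & forall i, corrS (c i) (c' i)].
Proof.
move=> fF GF wF; have [cardF FS tauF] := facet_in_star fF GF.
have [mw <-] := vert_at_onto v0 cardF wF.
have fv_inj := vert_at_inj (v0 := v0) cardF.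
have tfv_inj : injective (fun m : 'I_d => tau (vert_at F v0 m)).
  by move=> i j /tauF => /(_ (vert_at_in v0 cardF i) (vert_at_in v0 cardF j)) /fv_inj.
exists (invmx (amx k (fun m : 'I_d => vert_at F v0 m)) mw).
exists (invmx (amx k (fun m : 'I_d => tau (vert_at F v0 m))) mw); split.
- by move=> v /(vert_at_onto v0 cardF); apply: dual_coef_img.
- move=> _ /imsetP [v /(vert_at_onto v0 cardF) [u <-] ->].
  by apply: dual_coef_img => //; exists u.
- move=> i; apply: corr_invmx; last exact: det_amx_neq0.
  by move=> a m; rewrite !mxE; apply/corr_a/(subsetP FS)/vert_at_in.
Qed.

Lemma corr_deg_reduce b w : supp b \in D -> G \subset supp b -> (\sum_v b v)%N = d ->
  (1 < b w)%N ->
  (forall v, v \notin supp b -> v |: supp b \in D ->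
     deg_corr (fun u => dec_at b w u + (u == v))%N) ->
  deg_corr b.
Proof.
set H := supp b => HD GH sumb bw IH.
have wH : w \in H by rewrite inE ltnW.
have H0 : H != set0 by apply/set0Pn; exists w.
have Hd : (#|H| <= d)%N by rewrite ltnW // -sumb (card_supp_lt bw).
have [F fF HF] := face_sub_facet hm HD H0 Hd.
have GF := subset_trans GH HF; have [_ FS tauF] := facet_in_star fF GF.
have [c [c' [hc hc' cc']]] := facet_dual_coef fF GF (subsetP HF w wH).
have FD : F \in D by case/andP: fF.
pose A := [set v | (v \notin F) && (v |: H \in D)].
have AS : A \subset S.
  by apply/subsetP => v; rewrite inE => /andP [_ vHD]; apply: link_vertex_in_star vHD GH.
rewrite /deg_corr (deg_map_reduce hphi _ _ bw sumb hc) ?imset_id //.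
rewrite (deg_map_reduce hphi' _ (imsetS tau HF) bw sumb hc'); last first.
  by move=> u v /(subsetP HF) uF /(subsetP HF); apply: tauF.
rewrite (eq_bigl (fun v => v \in A)) => [|v]; last by rewrite /A inE.
rewrite (eq_bigl (fun v' => v' \in tau @: A)) => [|v']; last first.
  by rewrite /A -(tau_neighbours cxD cxD' iso HD GH HF FD) inE.
rewrite big_imset /=; last by move=> u v /(subsetP AS) uS /(subsetP AS); apply: (star_inj iso).
rewrite mulrN mulr_sumr; apply/corrN/corr_sum => v vA; rewrite mulrCA.
apply: corrM; first by apply: corr_sum => i _; apply/corrM/corr_a/(subsetP AS).
rewrite !X_mul_monomial; move: vA; rewrite inE => /andP [vF vHD].
by apply: IH => //; apply: contra vF; apply: (subsetP HF).
Qed.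
Lemma corr_deg_monomial b : supp b \in D -> G \subset supp b -> (\sum_v b v)%N = d ->
  deg_corr b.
Proof.
move: {2}(d - #|supp b|)%N (leqnn (d - #|supp b|)) => m.
elim: m b => [|m IH] b dm HD GH sumb;
  have [/existsP [w bw]|/existsPn sqf] := boolP [exists w, 1 < b w]%N;
  try by apply: corr_deg_squarefree => // w; rewrite leqNgt sqf.
  by move: dm; rewrite leqn0 subn_eq0 -{1}sumb leqNgt (card_supp_lt bw).
apply: (corr_deg_reduce HD GH sumb bw) => v vH vHD; have bw0 := ltnW bw.
apply: IH; rewrite ?supp_dec_at_add ?sum_dec_at_add // ?(subset_trans GH (subsetUr _ _)) //.
by move: dm; rewrite cardsU1 vH; lia.
Qed.

End Transfer.

Theorem lemma2p8 (k : fieldType) (d n n' s : nat)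
  (D : {set {set 'I_n}}) (D' : {set {set 'I_n'}})
  (eps : {set 'I_n} -> bool) (eps' : {set 'I_n'} -> bool)
  (j : 'I_s -> 'I_n) (tau : 'I_n -> 'I_n') (b : 'I_s -> nat) (e : bool)
  (phi : {mpoly (Kf k d n)[n]} -> Kf k d n)
  (phi' : {mpoly (Kf k d n')[n']} -> Kf k d n') :
  (2 <= d)%N ->
  homology_manifold k d D -> connected_cx D -> oriented k d D eps ->
  homology_manifold k d D' -> connected_cx D' -> oriented k d D' eps' ->
  injective j ->
  [set j m | m : 'I_s] \in D ->
  [set tau (j m) | m : 'I_s] \in D' ->
  star_iso D D' [set j m | m : 'I_s] [set tau (j m) | m : 'I_s] tau ->
  (forall m, (0 < b m)%N) -> (\sum_(m < s) b m)%N = d ->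
  (forall F, facet d D F -> [set j m | m : 'I_s] \subset F ->
     (-1) ^+ eps F = (-1) ^+ e * (-1) ^+ (eps' (tau @: F) + inversions tau F) :> k) ->
  is_deg_map D eps phi -> is_deg_map D' eps' phi' ->
  exists p q : {mpoly k[NV d n]},
    [/\ only_vars (star_verts D [set j m | m : 'I_s]) p,
        only_vars (star_verts D [set j m | m : 'I_s]) q,
        q != 0,
        phi (mono j b) = FracField.tofrac p / FracField.tofrac q
      & phi' (mono (fun m => tau (j m)) b)
        = (-1) ^+ e * (FracField.tofrac (transport tau p) / FracField.tofrac (transport tau q))].
Proof.
move=> d2 hm _ _ hm' _ _ _ GD _ iso bpos sumb orient hphi hphi'.
set G := [set j m | m : 'I_s] in GD iso orient *.
have tauG : [set tau (j m) | m : 'I_s] = tau @: G by rewrite -imset_comp.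
rewrite tauG in iso.
pose B v := (\sum_(m | j m == v) b m)%N.
have suppB : supp B = G.
  apply/setP => v; rewrite inE; apply/idP/imsetP => [|[m _ ->]].
    by case: (pickP (fun m => j m == v)) => [m /eqP <-|none]; [exists m | rewrite /B big_pred0].
  by rewrite /B (bigD1 m) //= (leq_trans (bpos m)) ?leq_addr.
have sumB : (\sum_v B v)%N = d by rewrite -sumb /B (partition_big j xpredT).
have [v0 _] : exists v0 : 'I_n, true.
  have : (\sum_v B v != 0)%N by rewrite sumB -lt0n ltnW.
  by rewrite sum_nat_eq0 => /forallPn [v0 _]; exists v0.
have := corr_deg_monomial v0 hm (proj1 hm') iso orient hphi hphi' (b := B).
rewrite suppB GD subxx sumB /deg_corr /mono !monomial_push => /(_ isT isT erefl).
move=> [p [q [hp hq q0 _ [-> ey]]]]; exists p, q; split => //.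
by rewrite -ey signrMK.
Qed.
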